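(* Let $H$ be an inner product space over $\mathbb{K}\in\{\mathbb{R},\mathbb{C}\}$. Let $x,y\in H$ with $x\neq 0$, $y\neq 0$, and let $\delta>0$ be such that $\|x-y\|\le \delta$. (a) If $\|y\|>\delta$, then $$0\le \|x\|^2\|y\|^2-|\langle x,y\rangle|^2\le \|x\|^2\|y\|^2-[\operatorname{Re}\langle x,y\rangle]^2\le \delta^2\|x\|^2 .$$ Moreover, the constant $1$ in front of $\delta^2$ is best possible. That is, for every $k\in(0,1)$ there exist an inner product space $H$, nonzero $x,y\in H$ and $\delta>0$ with $\|x-y\|\le\delta$ and $\|y\|>\delta$ such that $\|x\|^2\|y\|^2-[\operatorname{Re}\langle x,y\rangle]^2> k\,\delta^2\|x\|^2$. (b) If $\|y\|=\delta$, then $$\|x\|^2\le 2\operatorname{Re}\langle x,y\rangle\le 2|\langle x,y\rangle|,$$ and the constant $2$ is best possible in both inequalities. That is, for every $c<2$ there exist such $H,x,y,\delta$ with $\|x-y\|\le\delta=\|y\|$ and $\|x\|^2>c\operatorname{Re}\langle x,y\rangle$, and likewise with $\|x\|^2>c|\langle x,y\rangle|$. (c) If $\|y\|<\delta$, then $$\|x\|^2\le \delta^2-\|y\|^2+2\operatorname{Re}\langle x,y\rangle\le \delta^2-\|y\|^2+2|\langle x,y\rangle|,$$ and the constant $2$ is best possible. That is, for every $c<2$ there exist such $H,x,y,\delta$ with $\|x-y\|\le\delta$, $\|y\|<\delta$ and $\|x\|^2>\delta^2-\|y\|^2+c\operatorname{Re}\langle x,y\rangle$, and likewise with $c|\langle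 x,y\rangle|$ in place of $c\operatorname{Re}\langle x,y\rangle$.
   Context: $\|u\|=\sqrt{\langle u,u\rangle}$ denotes the norm induced by the inner product. *)

From HB Require Import structures.
From mathcomp Require Import all_boot all_order all_algebra.
From mathcomp Require Import all_reals.
From mathcomp Require Import complex.
Set Implicit Arguments. Unset Strict Implicit. Unset Printing Implicit Defensive.
Import Order.TTheory GRing.Theory Num.Theory.
Local Open Scope ring_scope.

Inductive scalar_kind := RealK | ComplexK.

Definition scal (R : realType) (k : scalar_kind) : numFieldType :=
  match k with RealK => R | ComplexK => (R[i] : numFieldType) end.

Definition conjK (R : realType) (k : scalar_kind) : scal R k -> scal R k :=
  match k return scal R k -> scal R k with
  | RealK => fun z => z
  | ComplexK => fun z : R[i] => (z^*)%R
  end.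

Definition ReK (R : realType) (k : scalar_kind) : scal R k -> R :=
  match k return scal R k -> R with
  | RealK => fun z => z
  | ComplexK => fun z : R[i] => complex.Re z
  end.

Definition absK (R : realType) (k : scalar_kind) (z : scal R k) : R :=
  ReK `|z|.

Record inner_product_space (R : realType) (k : scalar_kind) := IPS {
  ips_car :> lmodType (scal R k);
  inner : ips_car -> ips_car -> scal R k;
  inner_linear : forall (a : scal R k) (x y z : ips_car),
      inner (a *: x + y) z = a * inner x z + inner y z;
  inner_conj_sym : forall x y : ips_car, inner y x = conjK (inner x y);
  inner_ge0 : forall x : ips_car, 0 <= inner x x;
  inner_eq0 : forall x : ips_car, inner x x = 0 -> x = 0
}.

Definition ipnorm (R : realType) (k : scalar_kind)
  (H : inner_product_space R k) (u : H) : R :=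
  Num.sqrt (ReK (inner u u)).

From HB Require Import structures.
From mathcomp Require Import all_boot all_order all_algebra.
From mathcomp Require Import all_reals.
From mathcomp Require Import complex.
From mathcomp Require Import ring lra.
Import Order.TTheory GRing.Theory Num.Theory.
Local Open Scope ring_scope.

Set Implicit Arguments.
Unset Strict Implicit.
Unset Printing Implicit Defensive.

(* Expanding ||x - y||^2 <= delta^2 gives
     ||x||^2 <= delta^2 - ||y||^2 + 2 Re<x,y>,
   which is (b) and (c), since Re <= |.|.  In case (a) both sides of
   ||x||^2 + (||y||^2 - delta^2) <= 2 Re<x,y> are positive; squaring,
     4 (||x||^2 ||y||^2 - Re^2)
       <= 4 ||x||^2 ||y||^2 - (||x||^2 + ||y||^2 - delta^2)^2
        = 4 delta^2 ||x||^2 - (||x||^2 - ||y||^2 + delta^2)^2.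
   The lower bounds of (a) are Cauchy-Schwarz and Re^2 <= |.|^2.
   Sharpness is witnessed in K^2: x = (1,0), y = (1,1), delta = 1 gives
   equality in (a); x = (2,0), y = (1,0) gives ||x||^2 = 2 Re<x,y> = 2 |<x,y>|
   with delta = 1 for (b), and (c) follows with delta^2 = 3 - c. *)

Section Scalars.
Variables (R : realType) (k : scalar_kind).
Implicit Types a b : scal R k.

Lemma conjKD a b : conjK (a + b) = conjK a + conjK b.
Proof. by case: k a b => //= a b; exact: rmorphD. Qed.

Lemma conjKB a b : conjK (a - b) = conjK a - conjK b.
Proof. by case: k a b => //= a b; exact: rmorphB. Qed.

Lemma conjKM a b : conjK (a * b) = conjK a * conjK b.
Proof. by case: k a b => //= a b; exact: rmorphM. Qed.

Lemma conjKK a : conjK (conjK a) = a.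
Proof. by case: k a => //= a; exact: conjCK. Qed.

Lemma conjK_ge0 a : 0 <= a -> conjK a = a.
Proof. by case: k a => //= a; exact: geC0_conj. Qed.

Lemma conjK_nat n : conjK (n%:R : scal R k) = n%:R.
Proof. by rewrite conjK_ge0 ?ler0n. Qed.

Lemma ReKD a b : ReK (a + b) = ReK a + ReK b.
Proof. by case: k a b => //= -[a1 a2] [b1 b2]. Qed.

Lemma ReKB a b : ReK (a - b) = ReK a - ReK b.
Proof. by case: k a b => //= -[a1 a2] [b1 b2]. Qed.

Lemma ReK_conj a : ReK (conjK a) = ReK a.
Proof. by case: k a => //= -[a1 a2]. Qed.

Lemma ReK_ge0 a : 0 <= a -> 0 <= ReK a.
Proof. by case: k a => //= -[a1 a2]; rewrite lecE /= => /andP[]. Qed.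

Lemma ReKMl_ge0 a b : 0 <= a -> ReK (a * b) = ReK a * ReK b.
Proof.
case: k a b => //= -[a1 a2] [b1 b2]; rewrite lecE /= => /andP[/eqP -> _].
by simpc.
Qed.

Lemma ReK_nat n : ReK (n%:R : scal R k) = n%:R.
Proof.
elim: n => [|n IHn]; first by case: k.
by rewrite !mulrSr ReKD IHn; case: k.
Qed.

Lemma absK_nat n : absK (n%:R : scal R k) = n%:R.
Proof. by rewrite /absK normr_nat ReK_nat. Qed.

Lemma absKN a : absK (- a) = absK a.
Proof. by rewrite /absK normrN. Qed.

Lemma absK_sq a : ReK (conjK a * a) = absK a ^+ 2.
Proof.
rewrite /absK; case: k a => /= [a|[a1 a2]].
  by rewrite real_normK ?num_real.
by rewrite sqr_sqrtr ?addr_ge0 ?sqr_ge0 //; simpc; rewrite !expr2.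
Qed.

Lemma ReK_le_absK a : ReK a <= absK a.
Proof.
rewrite /absK; case: k a => /= [a|[a1 a2]]; first exact: ler_norm.
apply: le_trans (ler_norm a1) _; rewrite -sqrtr_sqr.
by rewrite ler_wsqrtr // lerDl sqr_ge0.
Qed.

Lemma ReK_sq_le_absK a : ReK a ^+ 2 <= absK a ^+ 2.
Proof.
rewrite /absK; case: k a => /= [a|[a1 a2]].
  by rewrite real_normK ?num_real.
by rewrite sqr_sqrtr ?addr_ge0 ?sqr_ge0 // lerDl sqr_ge0.
Qed.

Lemma mulK_conj_ge0 a : 0 <= a * conjK a.
Proof.
by case: k a => /= a; [rewrite -expr2 sqr_ge0 | exact: mul_conjC_ge0].
Qed.

Lemma mulK_conj_eq0 a : (a * conjK a == 0) = (a == 0).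
Proof.
by case: k a => /= a; [rewrite mulf_eq0 orbb | exact: mul_conjC_eq0].
Qed.

End Scalars.

Lemma gram_le_of_dist (F : realFieldType) (a n d r : F) :
  0 <= a -> d < n -> a + n - 2 * r <= d -> a * n - r ^+ 2 <= d * a.
Proof.
move=> a_ge0 dn dist_le.
have sq_le : (a + (n - d)) ^+ 2 <= (2 * r) ^+ 2.
  by rewrite lerXn2r ?nnegrE; lra.
have := sqr_ge0 (a - (n - d)); rewrite !expr2 in sq_le *; nra.
Qed.

Section InnerProduct.
Variables (R : realType) (k : scalar_kind) (H : inner_product_space R k).
Implicit Types (a : scal R k) (x y z : H).

Lemma innerB x y z : inner (x - y) z = inner x z - inner y z.
Proof. by rewrite addrC -scaleN1r inner_linear mulN1r addrC. Qed.

Lemma inner0 z : inner 0 z = 0.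
Proof. by rewrite -(subrr z) innerB subrr. Qed.

Lemma innerZ a x z : inner (a *: x) z = a * inner x z.
Proof. by rewrite -[a *: x]addr0 inner_linear inner0 addr0. Qed.

Lemma innerBr x y z : inner z (x - y) = inner z x - inner z y.
Proof. by rewrite inner_conj_sym innerB conjKB -!inner_conj_sym. Qed.

Lemma inner0r z : inner z 0 = 0.
Proof. by rewrite -(subrr z) innerBr subrr. Qed.

Lemma innerZr a x z : inner z (a *: x) = conjK a * inner z x.
Proof. by rewrite inner_conj_sym innerZ conjKM -inner_conj_sym. Qed.

Lemma ipnorm_ge0 x : 0 <= ipnorm x.
Proof. exact: sqrtr_ge0. Qed.

Lemma ipnorm_sq x : ipnorm x ^+ 2 = ReK (inner x x).
Proof. by rewrite sqr_sqrtr // ReK_ge0 ?inner_ge0. Qed.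

Lemma cauchy_schwarz x y :
  absK (inner x y) ^+ 2 <= ipnorm x ^+ 2 * ipnorm y ^+ 2.
Proof.
have [->|y0] := eqVneq y 0.
  by rewrite inner0r (absK_nat _ _ 0) expr0n mulr_ge0 ?sqr_ge0.
have B_gt0 : 0 < inner y y.
  by rewrite lt_def inner_ge0 andbT; apply: contra_neq y0 => /inner_eq0.
set A := inner x x; set B := inner y y; set z := inner x y.
(* v is orthogonal to y, so <v,v> = B <x,v> = B (B ||x||^2 - |<x,y>|^2). *)
pose v := B *: x - z *: y.
have vx : inner x v = B * A - conjK z * z.
  by rewrite innerBr !innerZr conjK_ge0 ?ltW.
have vy : inner y v = 0.
  by rewrite innerBr !innerZr conjK_ge0 ?ltW // inner_conj_sym -/z mulrC subrr.
have vv : inner v v = B * (B * A - conjK z * z).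
  by rewrite {1}/v innerB !innerZ vx vy mulr0 subr0.
have : 0 <= B * A - conjK z * z by rewrite -(pmulr_rge0 _ B_gt0) -vv inner_ge0.
move=> /ReK_ge0; rewrite ReKB (ReKMl_ge0 _ (ltW B_gt0)) absK_sq !ipnorm_sq.
by rewrite subr_ge0 mulrC.
Qed.

Lemma ipnorm_subX x y :
  ipnorm (x - y) ^+ 2 = ipnorm x ^+ 2 + ipnorm y ^+ 2 - 2 * ReK (inner x y).
Proof.
rewrite !ipnorm_sq innerB !innerBr !ReKB.
by rewrite [inner y x]inner_conj_sym ReK_conj; lra.
Qed.

Lemma dist_sq_le x y delta : 0 <= delta -> ipnorm (x - y) <= delta ->
  ipnorm x ^+ 2 + ipnorm y ^+ 2 - 2 * ReK (inner x y) <= delta ^+ 2.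
Proof.
by move=> delta_ge0 xy_le; rewrite -ipnorm_subX lerXn2r ?nnegrE ?ipnorm_ge0.
Qed.

Lemma gram_le_dist x y delta :
  0 <= delta -> ipnorm (x - y) <= delta -> delta < ipnorm y ->
  ipnorm x ^+ 2 * ipnorm y ^+ 2 - ReK (inner x y) ^+ 2
    <= delta ^+ 2 * ipnorm x ^+ 2.
Proof.
move=> delta_ge0 xy_le y_gt.
apply: gram_le_of_dist; first exact: sqr_ge0.
- by rewrite ltrXn2r.
- exact: dist_sq_le.
Qed.

End InnerProduct.

Section PairSpace.
Variables (R : realType) (k : scalar_kind).
Local Notation K := (scal R k).
Implicit Types u v w : K^o * K^o.

Definition pair_inner u v : K := u.1 * conjK v.1 + u.2 * conjK v.2.

Lemma pair_inner_linear a u v w :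
  pair_inner (a *: u + v) w = a * pair_inner u w + pair_inner v w.
Proof. by rewrite /pair_inner /= -![_ *: _]/(_ * _); ring. Qed.

Lemma pair_inner_conj_sym u v : pair_inner v u = conjK (pair_inner u v).
Proof. by rewrite /pair_inner conjKD !conjKM !conjKK mulrC [_.2 * _]mulrC. Qed.

Lemma pair_inner_ge0 u : 0 <= pair_inner u u.
Proof. by rewrite addr_ge0 ?mulK_conj_ge0. Qed.

Lemma pair_inner_eq0 u : pair_inner u u = 0 -> u = 0.
Proof.
move=> /eqP; rewrite paddr_eq0 ?mulK_conj_ge0 // !mulK_conj_eq0.
by case: u => u1 u2 /= /andP[/eqP -> /eqP ->].
Qed.

Definition pair_ips : inner_product_space R k :=
  IPS pair_inner_linear pair_inner_conj_sym pair_inner_ge0 pair_inner_eq0.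

Lemma ipnorm_pair (a b : K) :
  ipnorm ((a, b) : pair_ips) = Num.sqrt (absK a ^+ 2 + absK b ^+ 2).
Proof.
by rewrite /ipnorm /= /pair_inner ReKD -!absK_sq ![conjK _ * _]mulrC.
Qed.

Lemma pair_neq0 (a b : K) : a != 0 -> ((a, b) : pair_ips) <> 0.
Proof. by move=> /negP a_neq0 [a_eq0 _]; apply: a_neq0; rewrite a_eq0. Qed.

Lemma pair_witness_gram : exists x y : pair_ips,
  [/\ x <> 0, y <> 0, ipnorm x = 1, ipnorm y ^+ 2 = 2 &
      ipnorm (x - y) = 1 /\ ReK (inner x y) = 1].
Proof.
have absK0 := absK_nat R k 0; have absK1 := absK_nat R k 1.
exists (1, 0), (1, 1); split; try exact: pair_neq0 (oner_neq0 _).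
- by rewrite ipnorm_pair absK0 absK1 expr0n expr1n addr0 sqrtr1.
- by rewrite ipnorm_pair absK1 expr1n sqr_sqrtr // addr_ge0.
split.
- rewrite -[_ - _]/((1 - 1, 0 - 1) : pair_ips) subrr sub0r ipnorm_pair absKN.
  by rewrite absK0 absK1 expr0n expr1n add0r sqrtr1.
- by rewrite /= /pair_inner (conjK_nat _ _ 1) mul0r addr0 mulr1 (ReK_nat _ _ 1).
Qed.

Lemma pair_witness_double : exists x y : pair_ips,
  [/\ x <> 0, y <> 0, ipnorm x ^+ 2 = 4, ipnorm y = 1 &
      [/\ ipnorm (x - y) = 1, ReK (inner x y) = 2 & absK (inner x y) = 2]].
Proof.
have absK0 := absK_nat R k 0; have absK1 := absK_nat R k 1.
have two_neq0 : (2 : K) != 0 by rewrite pnatr_eq0.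
exists (2, 0), (1, 0); split.
- exact: pair_neq0.
- exact: pair_neq0 (oner_neq0 _).
- rewrite ipnorm_pair absK0 (absK_nat _ _ 2) expr0n addr0.
  by rewrite sqr_sqrtr ?sqr_ge0 // -natrX.
- by rewrite ipnorm_pair absK0 absK1 expr0n expr1n addr0 sqrtr1.
have inner_xy : inner ((2, 0) : pair_ips) (1, 0) = 2.
  by rewrite /= /pair_inner (conjK_nat _ _ 1) mul0r addr0 mulr1.
rewrite inner_xy ReK_nat absK_nat; split => //.
rewrite -[_ - _]/((2 - 1, 0 - 0) : pair_ips) subrr ipnorm_pair.
have -> : (2 - 1 : K) = 1 by ring.
by rewrite absK0 absK1 expr0n expr1n addr0 sqrtr1.
Qed.

End PairSpace.

Theorem theorem1 (R : realType) (k : scalar_kind) :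
  (* the inequalities (a), (b), (c) *)
  (forall (H : inner_product_space R k) (x y : H) (delta : R),
     x <> 0 -> y <> 0 -> 0 < delta -> ipnorm (x - y) <= delta ->
     (delta < ipnorm y ->
        0 <= ipnorm x ^+ 2 * ipnorm y ^+ 2 - absK (inner x y) ^+ 2 /\
        ipnorm x ^+ 2 * ipnorm y ^+ 2 - absK (inner x y) ^+ 2
          <= ipnorm x ^+ 2 * ipnorm y ^+ 2 - ReK (inner x y) ^+ 2 /\
        ipnorm x ^+ 2 * ipnorm y ^+ 2 - ReK (inner x y) ^+ 2
          <= delta ^+ 2 * ipnorm x ^+ 2) /\
     (ipnorm y = delta ->
        ipnorm x ^+ 2 <= 2 * ReK (inner x y) /\
        2 * ReK (inner x y) <= 2 * absK (inner x y)) /\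
     (ipnorm y < delta ->
        ipnorm x ^+ 2 <= delta ^+ 2 - ipnorm y ^+ 2 + 2 * ReK (inner x y) /\
        delta ^+ 2 - ipnorm y ^+ 2 + 2 * ReK (inner x y)
          <= delta ^+ 2 - ipnorm y ^+ 2 + 2 * absK (inner x y)))
  /\
  (* (a): the constant 1 is best possible *)
  (forall c : R, 0 < c < 1 ->
     exists (H : inner_product_space R k) (x y : H) (delta : R),
       [/\ x <> 0, y <> 0, 0 < delta, ipnorm (x - y) <= delta /\
           delta < ipnorm y &
           ipnorm x ^+ 2 * ipnorm y ^+ 2 - ReK (inner x y) ^+ 2
             > c * delta ^+ 2 * ipnorm x ^+ 2])
  /\
  (* (b): the constant 2 is best possible in both inequalities *)
  (forall c : R, c < 2 ->
     (exists (H : inner_product_space R k) (x y : H) (delta : R),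
       [/\ x <> 0, y <> 0, 0 < delta, ipnorm (x - y) <= delta /\
           ipnorm y = delta &
           ipnorm x ^+ 2 > c * ReK (inner x y)]) /\
     (exists (H : inner_product_space R k) (x y : H) (delta : R),
       [/\ x <> 0, y <> 0, 0 < delta, ipnorm (x - y) <= delta /\
           ipnorm y = delta &
           ipnorm x ^+ 2 > c * absK (inner x y)]))
  /\
  (* (c): the constant 2 is best possible *)
  (forall c : R, c < 2 ->
     (exists (H : inner_product_space R k) (x y : H) (delta : R),
       [/\ x <> 0, y <> 0, 0 < delta, ipnorm (x - y) <= delta /\
           ipnorm y < delta &
           ipnorm x ^+ 2 > delta ^+ 2 - ipnorm y ^+ 2 + c * ReK (inner x y)]) /\
     (exists (H : inner_product_space R k) (x y : H) (delta : R),
       [/\ x <> 0, y <> 0, 0 < delta, ipnorm (x - y) <= delta /\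
           ipnorm y < delta &
           ipnorm x ^+ 2 > delta ^+ 2 - ipnorm y ^+ 2 + c * absK (inner x y)])).
Proof.
split.
  move=> H x y delta _ _ /ltW delta_ge0 xy_le.
  have dist_le := dist_sq_le delta_ge0 xy_le.
  have cs := cauchy_schwarz x y.
  have re_le := ReK_le_absK (inner x y).
  have re_sq_le := ReK_sq_le_absK (inner x y).
  split; [|split] => y_cmp; last by split; lra.
  - by split; [lra | split; [lra | exact: gram_le_dist]].
  - by rewrite y_cmp in dist_le; split; lra.
have [x [y [x0 y0 nx ny2 [nxy rexy]]]] := pair_witness_gram R k.
have [u [v [u0 v0 nu nv [nuv reuv absuv]]]] := pair_witness_double R k.
split.
  move=> c /andP[c_gt0 c_lt1]; exists (pair_ips R k), x, y, 1.
  have ny_gt1 : 1 < ipnorm y by have := ipnorm_ge0 y; nra.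
  by split; rewrite ?nx ?ny2 ?nxy ?rexy ?expr1n //; lra.
split=> c c_lt2.
  split; exists (pair_ips R k), u, v, 1;
    by split; rewrite ?nu ?nv ?nuv ?reuv ?absuv //; lra.
have delta_gt1 : 1 < Num.sqrt (3 - c) by rewrite -{1}sqrtr1 ltr_sqrt; lra.
have delta_sq : Num.sqrt (3 - c) ^+ 2 = 3 - c by rewrite sqr_sqrtr //; lra.
split; exists (pair_ips R k), u, v, (Num.sqrt (3 - c));
  by split; rewrite ?nu ?nv ?nuv ?reuv ?absuv ?delta_sq //; lra.
Qed.
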